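(* For the one-dimensional Model I with parameter $\delta$, the expected number $\mathbb{E}[\tau]$ of consecutive traversals of the first edge satisfies $\mathbb{E}[\tau]\to\infty$ as $\delta\to0^+$, and more precisely $\mathbb{E}[\tau]$ is of order $|\log\delta|$: there exist constants $0<c\le C<\infty$ with $c|\log\delta|\le\mathbb{E}[\tau]\le C|\log\delta|$ for all sufficiently small $\delta>0$.
   Context: Model I on $\mathbb{Z}$ with parameter $\delta>0$: $S_0=0$, $S_1=\pm1$ with probability $1/2$ each. For $n\ge1$ let $e_n=\{S_{n-1},S_n\}$ and $m_n=\max\{k\ge1: e_{n-l+1}=e_n \text{ for all } 1\le l\le k\}$. Conditionally on $\sigma(S_0,\dots,S_n)$, the walk recrosses $e_n$ (i.e. $S_{n+1}=S_{n-1}$) with probability $\frac{1+m_n}{2+m_n}-\delta$ and otherwise crosses the other edge at $S_n$, with probability $\frac{1}{2+m_n}+\delta$. $\tau=\sup\{n\ge1: S_m\in\{0,S_1\}\ \text{for all } m\le n\}$. *)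

From Stdlib Require Import Reals ZArith List Bool.
Import ListNotations.
Open Scope R_scope.

(* A history is stored REVERSED: [S_n; S_(n-1); ...; S_0]. *)

(* the edges e_n, e_(n-1), ..., e_1 (most recent first) *)
Fixpoint edges (h : list Z) : list (Z * Z) :=
  match h with
  | a :: ((b :: _) as t) => (a, b) :: edges t
  | _ => []
  end.

Definition edge_eqb (e f : Z * Z) : bool :=
  let (a, b) := e in let (c, d) := f in
  ((a =? c)%Z && (b =? d)%Z) || ((a =? d)%Z && (b =? c)%Z).

Fixpoint run_len (e : Z * Z) (l : list (Z * Z)) : nat :=
  match l with
  | [] => O
  | f :: t => if edge_eqb e f then S (run_len e t) else O
  end.

(* m_n = max{k >= 1 : e_(n-l+1) = e_n for 1 <= l <= k} *)
Definition mrun (h : list Z) : nat :=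
  match edges h with
  | [] => O
  | e :: t => run_len e (e :: t)
  end.

(* conditional probability that S_(n+1) = x given the (reversed) history h *)
Definition trans (delta : R) (h : list Z) (x : Z) : R :=
  match h with
  | [] => 0
  | [s0] => if ((x =? s0 + 1)%Z || (x =? s0 - 1)%Z) then 1/2 else 0
  | sn :: sn1 :: _ =>
      let m := INR (mrun h) in
      if (x =? sn1)%Z then (1 + m) / (2 + m) - delta
      else if (x =? 2 * sn - sn1)%Z then 1 / (2 + m) + delta
      else 0
  end.

Fixpoint pathprob (delta : R) (h : list Z) : R :=
  match h with
  | [] => 0
  | [s0] => if (s0 =? 0)%Z then 1 else 0
  | x :: t => pathprob delta t * trans delta t x
  end.

Fixpoint paths (n : nat) : list (list Z) :=
  match n with
  | O => [[0%Z]]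
  | S k => flat_map (fun h => [((hd 0%Z h + 1)%Z :: h); ((hd 0%Z h - 1)%Z :: h)]) (paths k)
  end.

Definition sumR (l : list R) : R := fold_right Rplus 0 l.

(* S_k in {0, S_1}, for the chronological path l = [S_0; S_1; ...] *)
Definition on_first (l : list Z) (k : nat) : bool :=
  let x := nth k l 0%Z in (x =? 0)%Z || (x =? nth 1 l 0%Z)%Z.

Definition stays_upto (l : list Z) (n : nat) : bool :=
  forallb (on_first l) (seq 0 (S n)).

(* P(tau >= n) = P(S_m in {0,S_1} for all m <= n) *)
Definition P_tau_ge (delta : R) (n : nat) : R :=
  sumR (map (fun h => if stays_upto (rev h) n then pathprob delta h else 0) (paths n)).

(* P(tau = n) = P(S_m in {0,S_1} for m <= n, S_(n+1) not in {0,S_1}) *)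
Definition P_tau_eq (delta : R) (n : nat) : R :=
  sumR (map (fun h => if stays_upto (rev h) n && negb (on_first (rev h) (S n))
                      then pathprob delta h else 0) (paths (S n))).

(* E[tau] = E is finite and equals E: tau < infinity a.s. and
   sum_n n P(tau = n) converges to E *)
Definition ExpectedTau (delta : R) (E : R) : Prop :=
  Un_cv (fun n => P_tau_ge delta n) 0 /\
  infinite_sum (fun n => INR n * P_tau_eq delta n) E.

(* A walk that has stayed on its first edge up to time n >= 1 has crossed that
   edge n times in a row, so it recrosses with probability (n+1)/(n+2) - delta
   and leaves with probability 1/(n+2) + delta.  Hence
   P(tau > k) = prod_(j<k) ((j+2)/(j+3) - delta), which lies between
   2/(k+2) (1-2 delta)^k and 2/(k+2) (1-delta)^k, and E[tau] = sum_k P(tau > k).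
   Up to k ~ 1/delta the terms are comparable to the harmonic series 2/(k+2),
   which gives the lower bound |log delta|/2; past k ~ 1/delta^2 the geometric
   factor makes the remainder at most 1, which gives the upper bound. *)

From Stdlib Require Import Reals Lra Lia ZArith List Bool.
Import ListNotations.
Open Scope R_scope.

Lemma paths_length n h : In h (paths n) -> length h = S n.
Proof.
  revert h; induction n as [|n IHn]; simpl; intros h Hh.
  - destruct Hh as [<-|[]]; reflexivity.
  - apply in_flat_map in Hh as [h' [Hh' Hchild]].
    destruct Hchild as [<-|[<-|[]]]; simpl; rewrite IHn; auto.
Qed.

Lemma in_paths_S n h : In h (paths (S n)) ->
  exists h', In h' (paths n) /\
    (h = (hd 0%Z h' + 1)%Z :: h' \/ h = (hd 0%Z h' - 1)%Z :: h').
Proof.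
  simpl; intro Hh. apply in_flat_map in Hh as [h' [Hh' Hchild]].
  exists h'; split; auto. destruct Hchild as [<-|[<-|[]]]; auto.
Qed.

Lemma stays_upto_S l n : stays_upto l (S n) = stays_upto l n && on_first l (S n).
Proof.
  unfold stays_upto. rewrite (seq_S (S n) 0), forallb_app. simpl.
  rewrite andb_true_r. reflexivity.
Qed.

Lemma stays_upto_app l x n : (n < length l)%nat -> (1 < length l)%nat ->
  stays_upto (l ++ [x]) n = stays_upto l n.
Proof.
  intros Hn Hl.
  assert (Hfirst : forall k, (k < length l)%nat -> on_first (l ++ [x]) k = on_first l k).
  { intros k Hk. unfold on_first. rewrite !app_nth1 by lia. reflexivity. }
  induction n.
  - unfold stays_upto; simpl. rewrite Hfirst by lia. reflexivity.
  - rewrite !stays_upto_S, IHn, Hfirst by lia. reflexivity.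
Qed.

Definition on_first_edge (h : list Z) (x : Z) : bool :=
  (x =? 0)%Z || (x =? nth 1 (rev h) 0%Z)%Z.

Section Extension.
Variables (h : list Z) (x : Z) (n : nat).
Hypotheses (h_length : length h = S n) (n_pos : (1 <= n)%nat).

Lemma stays_upto_cons : stays_upto (rev (x :: h)) n = stays_upto (rev h) n.
Proof. simpl. apply stays_upto_app; rewrite length_rev; lia. Qed.

Lemma on_first_cons : on_first (rev (x :: h)) (S n) = on_first_edge h x.
Proof.
  simpl. unfold on_first, on_first_edge.
  rewrite app_nth2 by (rewrite length_rev; lia).
  rewrite length_rev, h_length, Nat.sub_diag, app_nth1 by (rewrite length_rev; lia).
  reflexivity.
Qed.

Lemma stays_upto_cons_S :
  stays_upto (rev (x :: h)) (S n) = stays_upto (rev h) n && on_first_edge h x.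
Proof. rewrite stays_upto_S, stays_upto_cons, on_first_cons. reflexivity. Qed.

End Extension.

Fixpoint alternating_path (s : Z) (n : nat) : list Z :=
  match n with
  | O => [0%Z]
  | S k => (if Nat.even (S k) then 0%Z else s) :: alternating_path s k
  end.

Lemma alternating_path_length s n : length (alternating_path s n) = S n.
Proof. induction n; simpl; auto. Qed.

Lemma alternating_path_first_step s n : (1 <= n)%nat ->
  nth 1 (rev (alternating_path s n)) 0%Z = s.
Proof.
  induction n as [|n IHn]; intro Hn; [lia|].
  destruct n; [reflexivity|].
  change (alternating_path s (S (S n)))
    with ((if Nat.even (S (S n)) then 0%Z else s) :: alternating_path s (S n)).
  simpl rev. rewrite app_nth1
    by (simpl; rewrite length_app, length_rev, alternating_path_length; simpl; lia).
  apply IHn; lia.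
Qed.

Lemma alternating_path_cons2 s n : (1 <= n)%nat -> exists t,
  alternating_path s n =
  (if Nat.even n then 0%Z else s) :: (if Nat.even n then s else 0%Z) :: t.
Proof.
  intro Hn. destruct n as [|[|n]]; [lia| now exists [] |].
  exists (alternating_path s n).
  change (alternating_path s (S (S n))) with
    ((if Nat.even n then 0%Z else s)
       :: (if Nat.even (S n) then 0%Z else s) :: alternating_path s n).
  change (Nat.even (S (S n))) with (Nat.even n).
  rewrite Nat.even_succ, <- Nat.negb_even. destruct (Nat.even n); reflexivity.
Qed.

Lemma edges_alternating_path_S s n :
  edges (alternating_path s (S n)) =
  (if Nat.even (S n) then 0%Z else s, if Nat.even n then 0%Z else s)
    :: edges (alternating_path s n).
Proof. destruct n; reflexivity. Qed.

Lemma alternating_path_edges s n :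
  Forall (fun f => f = (0%Z, s) \/ f = (s, 0%Z)) (edges (alternating_path s n)) /\
  length (edges (alternating_path s n)) = n.
Proof.
  induction n as [|n [IHall IHlen]]; [simpl; auto|].
  rewrite edges_alternating_path_S. split.
  - constructor; auto. rewrite Nat.even_succ, <- Nat.negb_even.
    destruct (Nat.even n); auto.
  - simpl. rewrite IHlen. reflexivity.
Qed.

Lemma run_len_all e l : (forall f, In f l -> edge_eqb e f = true) -> run_len e l = length l.
Proof. induction l; simpl; intros Hl; auto. rewrite Hl, IHl; auto. Qed.

Lemma mrun_alternating_path s n : (s = 1%Z \/ s = (-1)%Z) ->
  mrun (alternating_path s n) = n.
Proof.
  intro Hs. destruct (alternating_path_edges s n) as [Hall Hlen]. unfold mrun.
  destruct (edges (alternating_path s n)) as [|e t]; [auto|].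
  rewrite run_len_all; [auto|]. rewrite Forall_forall in Hall. intros f Hf.
  destruct (Hall e (or_introl eq_refl)) as [-> | ->], (Hall f Hf) as [-> | ->],
    Hs as [-> | ->]; reflexivity.
Qed.

Lemma alternating_path_hd s n :
  hd 0%Z (alternating_path s n) = if Nat.even n then 0%Z else s.
Proof. destruct n; reflexivity. Qed.

Lemma staying_path_alternates n h :
  In h (paths n) -> (1 <= n)%nat -> stays_upto (rev h) n = true ->
  exists s, (s = 1%Z \/ s = (-1)%Z) /\ h = alternating_path s n.
Proof.
  revert h; induction n as [|n IHn]; intros h Hh Hn Hstay; [lia|].
  destruct (in_paths_S n h Hh) as [h' [Hh' Hx]].
  destruct n.
  - destruct Hh' as [<-|[]].
    destruct Hx as [-> | ->]; [exists 1%Z | exists (-1)%Z]; auto.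
  - assert (exists x, h = x :: h') as [x ->] by (destruct Hx as [-> | ->]; eauto).
    rewrite stays_upto_cons_S in Hstay by (auto using paths_length; lia).
    apply andb_prop in Hstay as [Hstay Hreturn].
    destruct (IHn h' Hh' ltac:(lia) Hstay) as [s [Hs ->]].
    exists s; split; auto.
    unfold on_first_edge in Hreturn. rewrite alternating_path_first_step in Hreturn by lia.
    rewrite alternating_path_hd in Hx.
    change (alternating_path s (S (S n)))
      with ((if Nat.even (S (S n)) then 0%Z else s) :: alternating_path s (S n)).
    change (Nat.even (S (S n))) with (Nat.even n).
    rewrite Nat.even_succ, <- Nat.negb_even in Hx.
    destruct (Nat.even n), Hs as [-> | ->], Hx as [Hx | Hx]; injection Hx as ->;
      try discriminate; reflexivity.
Qed.

Definition recross_prob (d : R) (m : nat) : R := (1 + INR m) / (2 + INR m) - d.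
Definition cross_prob (d : R) (m : nat) : R := 1 / (2 + INR m) + d.

Lemma pathprob_cons d x y h :
  pathprob d (x :: y :: h) = pathprob d (y :: h) * trans d (y :: h) x.
Proof. reflexivity. Qed.

Lemma staying_children_split d n h (G : bool -> R -> R) :
  In h (paths n) -> (1 <= n)%nat -> stays_upto (rev h) n = true ->
  G (on_first_edge h (hd 0%Z h + 1)) (pathprob d ((hd 0%Z h + 1)%Z :: h)) +
  G (on_first_edge h (hd 0%Z h - 1)) (pathprob d ((hd 0%Z h - 1)%Z :: h)) =
  G true (pathprob d h * recross_prob d n) + G false (pathprob d h * cross_prob d n).
Proof.
  intros Hh Hn Hstay.
  destruct (staying_path_alternates n h Hh Hn Hstay) as [s [Hs ->]].
  unfold on_first_edge. rewrite alternating_path_first_step by lia.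
  assert (Hm := mrun_alternating_path s n Hs).
  destruct (alternating_path_cons2 s n Hn) as [t Ht]. rewrite Ht in Hm |- *.
  rewrite !pathprob_cons. unfold trans. rewrite Hm.
  set (P := pathprob d _). unfold recross_prob, cross_prob. cbn [hd].
  destruct (Nat.even n), Hs as [-> | ->]; simpl;
    first [reflexivity | apply Rplus_comm].
Qed.

Lemma sumR_map_ext_in {A} (F G : A -> R) l :
  (forall x, In x l -> F x = G x) -> sumR (map F l) = sumR (map G l).
Proof. induction l as [|x l IHl]; simpl; intros Hext; auto. rewrite Hext, IHl; auto. Qed.

Lemma sumR_map_mulr {A} (F : A -> R) c l :
  sumR (map (fun x => F x * c) l) = sumR (map F l) * c.
Proof. induction l as [|x l IHl]; simpl; [ring|]. rewrite IHl. ring. Qed.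

Lemma sumR_paths_S (F : list Z -> R) n :
  sumR (map F (paths (S n))) =
  sumR (map (fun h => F ((hd 0%Z h + 1)%Z :: h) + F ((hd 0%Z h - 1)%Z :: h)) (paths n)).
Proof.
  simpl. induction (paths n) as [|h l IHl]; simpl; auto. rewrite IHl. ring.
Qed.

Lemma P_tau_ge_S d n : (1 <= n)%nat -> P_tau_ge d (S n) = P_tau_ge d n * recross_prob d n.
Proof.
  intro Hn. unfold P_tau_ge. rewrite sumR_paths_S, <- sumR_map_mulr.
  apply sumR_map_ext_in. intros h Hh.
  rewrite !stays_upto_cons_S by (auto using paths_length).
  destruct (stays_upto (rev h) n) eqn:Hstay; cbn [andb]; [|ring].
  etransitivity;
    [exact (staying_children_split d n h (fun r p => if r then p else 0) Hh Hn Hstay)|].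
  cbv beta iota. ring.
Qed.

Lemma P_tau_eq_ge d n : (1 <= n)%nat -> P_tau_eq d n = P_tau_ge d n * cross_prob d n.
Proof.
  intro Hn. unfold P_tau_eq, P_tau_ge. rewrite sumR_paths_S, <- sumR_map_mulr.
  apply sumR_map_ext_in. intros h Hh. assert (Hlen := paths_length n h Hh).
  rewrite !stays_upto_cons, !on_first_cons by auto.
  destruct (stays_upto (rev h) n) eqn:Hstay; cbn [andb]; [|ring].
  etransitivity;
    [exact (staying_children_split d n h (fun r p => if negb r then p else 0) Hh Hn Hstay)|].
  cbv beta iota delta [negb]. ring.
Qed.

Lemma P_tau_ge_1 d : P_tau_ge d 1 = 1.
Proof. unfold P_tau_ge. simpl. field. Qed.

Lemma P_tau_eq_0 d : P_tau_eq d 0 = 0.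
Proof. unfold P_tau_eq. simpl. ring. Qed.

Definition tail_prob (d : R) (k : nat) : R := P_tau_ge d (S k).

Lemma tail_prob_0 d : tail_prob d 0 = 1.
Proof. apply P_tau_ge_1. Qed.

Lemma tail_prob_S d k :
  tail_prob d (S k) = tail_prob d k * ((2 + INR k) / (3 + INR k) - d).
Proof.
  unfold tail_prob. rewrite P_tau_ge_S by lia. unfold recross_prob. rewrite S_INR.
  do 3 f_equal; ring.
Qed.

Lemma P_tau_eq_S d k : P_tau_eq d (S k) = tail_prob d k - tail_prob d (S k).
Proof.
  rewrite P_tau_eq_ge, tail_prob_S by lia. unfold tail_prob, cross_prob.
  rewrite S_INR. assert (0 <= INR k) by apply pos_INR. field. lra.
Qed.

Lemma pow_ge_one_sub_mul x n : 0 <= x <= 1 -> 1 - INR n * x <= (1 - x) ^ n.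
Proof.
  intro Hx. induction n as [|n IHn]; [simpl; lra|].
  rewrite S_INR. simpl pow. assert (0 <= INR n) by apply pos_INR.
  assert (0 <= (1 - x) ^ n) by (apply pow_le; lra). nra.
Qed.

Lemma pow_one_sub_mul_le x n : 0 <= x <= 1 -> (1 - x) ^ n * (1 + INR n * x) <= 1.
Proof.
  intro Hx. induction n as [|n IHn]; [simpl; lra|].
  rewrite S_INR. simpl pow. assert (0 <= INR n) by apply pos_INR.
  assert (0 <= (1 - x) ^ n) by (apply pow_le; lra).
  assert ((1 - x) * (1 + (INR n + 1) * x) <= 1 + INR n * x) by nra. nra.
Qed.

Lemma pow_unit_interval x k : 0 <= x <= 1 -> 0 <= x ^ k <= 1.
Proof. intro. split; [apply pow_le; lra|]. rewrite <- (pow1 k). apply pow_incr; lra. Qed.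

Lemma geometric_squeeze u c x : 0 <= x < 1 -> 0 <= c ->
  (forall n, 0 <= u n <= c * x ^ n) -> Un_cv u 0.
Proof.
  intros Hx Hc Hu eps Heps.
  destruct (pow_lt_1_zero x ltac:(rewrite Rabs_pos_eq; lra) (eps / (c + 1)))
    as [N HN]; [apply Rdiv_lt_0_compat; lra|].
  exists N. intros n Hn. unfold Rdist. rewrite Rminus_0_r.
  destruct (Hu n) as [Hlo Hhi]. rewrite Rabs_pos_eq by lra.
  assert (Hxn := HN n Hn). rewrite Rabs_pos_eq in Hxn by (apply pow_le; lra).
  assert (0 <= x ^ n) by (apply pow_le; lra).
  assert (eps / (c + 1) * (c + 1) = eps) by (field; lra).
  nra.
Qed.

Lemma ln_le_sub_1 y : 0 < y -> ln y <= y - 1.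
Proof. intro Hy. assert (H := exp_ineq1_le (ln y)). rewrite exp_ln in H; lra. Qed.

Lemma ln_le x y : 0 < x -> x <= y -> ln x <= ln y.
Proof. intros Hx [Hxy | <-]; [left; apply ln_increasing |]; lra. Qed.

Lemma inv_succ_le_ln_diff y : 0 < y -> 1 / (y + 1) <= ln (y + 1) - ln y.
Proof.
  intro Hy. assert (H := ln_le_sub_1 (y / (y + 1)) ltac:(apply Rdiv_lt_0_compat; lra)).
  unfold Rdiv in H. rewrite ln_mult, ln_Rinv in H by (try apply Rinv_0_lt_compat; lra).
  assert (y * / (y + 1) - 1 = - (1 / (y + 1))) by (field; lra). lra.
Qed.

Lemma ln_diff_le_inv y : 0 < y -> ln (y + 1) - ln y <= 1 / y.
Proof.
  intro Hy. assert (H := ln_le_sub_1 ((y + 1) / y) ltac:(apply Rdiv_lt_0_compat; lra)).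
  unfold Rdiv in H. rewrite ln_mult, ln_Rinv in H by (try apply Rinv_0_lt_compat; lra).
  assert ((y + 1) * / y - 1 = 1 / y) by (field; lra). lra.
Qed.

Lemma nat_between x : 0 <= x -> exists K : nat, x <= INR K <= x + 1.
Proof.
  intro Hx. destruct (archimed x) as [Hup1 Hup2].
  assert (Hpos : (0 < up x)%Z) by (apply lt_IZR; lra).
  exists (Z.to_nat (up x)). rewrite INR_IZR_INZ, Z2Nat.id by lia. lra.
Qed.

Lemma cv_le_upper_bound u E B : Un_cv u E -> (forall n, u n <= B) -> E <= B.
Proof.
  intros HE Hub. apply (@Rle_cv_lim u (fun _ => B) E B Hub HE).
  intros eps Heps. exists 0%nat. intros. unfold Rdist. rewrite Rminus_diag, Rabs_R0. lra.
Qed.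

Section TailBounds.
Variable d : R.
Hypothesis d_range : 0 < d <= 1/2.

(* Without the drift [d] the tail would be [prod_(j<k) (2+j)/(3+j) = 2/(k+2)];
   each factor loses between [d] and [2d] in relative terms. *)
Lemma tail_prob_bounds k :
  0 <= tail_prob d k /\
  2 / (INR k + 2) * (1 - 2 * d) ^ k <= tail_prob d k <= 2 / (INR k + 2) * (1 - d) ^ k.
Proof.
  induction k as [|k [IHpos [IHlo IHup]]].
  - rewrite tail_prob_0. simpl. lra.
  - rewrite tail_prob_S.
    assert (Hk : 0 <= INR k) by apply pos_INR.
    set (r := (2 + INR k) / (3 + INR k)).
    assert (Hr : 2/3 <= r <= 1).
    { unfold r; split; apply Rmult_le_reg_r with (3 + INR k); try lra; field_simplify; lra. }
    assert (Hratio : 2 / (INR (S k) + 2) = r * (2 / (INR k + 2))).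
    { unfold r. rewrite S_INR. field. lra. }
    rewrite Hratio. simpl pow.
    assert (0 < 2 / (INR k + 2)) by (apply Rdiv_lt_0_compat; lra).
    set (c := 2 / (INR k + 2)) in *.
    set (T := tail_prob d k) in *.
    assert (Hq1 : 0 <= c * (1 - d) ^ k) by (apply Rmult_le_pos, pow_le; lra).
    assert (Hq2 : 0 <= c * (1 - 2 * d) ^ k) by (apply Rmult_le_pos, pow_le; lra).
    split; [|split].
    + apply Rmult_le_pos; lra.
    + apply Rle_trans with (c * (1 - 2 * d) ^ k * (r - d)).
      * replace (r * c * ((1 - 2 * d) * (1 - 2 * d) ^ k))
          with (c * (1 - 2 * d) ^ k * (r * (1 - 2 * d))) by ring.
        apply Rmult_le_compat_l; nra.
      * apply Rmult_le_compat_r; lra.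
    + apply Rle_trans with (c * (1 - d) ^ k * (r - d)).
      * apply Rmult_le_compat_r; lra.
      * replace (r * c * ((1 - d) * (1 - d) ^ k))
          with (c * (1 - d) ^ k * (r * (1 - d))) by ring.
        apply Rmult_le_compat_l; nra.
Qed.

Lemma tail_prob_nonneg k : 0 <= tail_prob d k.
Proof. apply tail_prob_bounds. Qed.

Lemma tail_prob_le_harmonic k : tail_prob d k <= 2 / (INR k + 2).
Proof.
  destruct (tail_prob_bounds k) as [_ [_ Hup]].
  assert (Hpow := pow_unit_interval (1 - d) k ltac:(lra)).
  assert (0 < 2 / (INR k + 2)) by (apply Rdiv_lt_0_compat; [lra | pose proof (pos_INR k); lra]).
  nra.
Qed.

Lemma tail_prob_le_geometric k : tail_prob d k <= (1 - d) ^ k.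
Proof.
  destruct (tail_prob_bounds k) as [_ [_ Hup]].
  assert (Hpow := pow_unit_interval (1 - d) k ltac:(lra)).
  assert (0 <= INR k) by apply pos_INR.
  assert (0 < 2 / (INR k + 2) <= 1).
  { split; [apply Rdiv_lt_0_compat; lra|].
    apply Rmult_le_reg_r with (INR k + 2); [lra|]. field_simplify; lra. }
  nra.
Qed.

Lemma tail_prob_ge_harmonic k : 4 * d * INR k <= 1 -> 1 / (INR k + 2) <= tail_prob d k.
Proof.
  intro Hk. destruct (tail_prob_bounds k) as [_ [Hlo _]].
  assert (Hbern := pow_ge_one_sub_mul (2 * d) k ltac:(lra)).
  assert (0 <= INR k) by apply pos_INR.
  assert (0 < 2 / (INR k + 2)) by (apply Rdiv_lt_0_compat; lra).
  assert (1 / (INR k + 2) = 2 / (INR k + 2) * (1/2)) by (field; lra).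
  nra.
Qed.

Lemma sum_weighted_P_tau_eq N :
  sum_f_R0 (fun n => INR n * P_tau_eq d n) (S N) =
  sum_f_R0 (tail_prob d) N - INR (S N) * tail_prob d (S N).
Proof.
  induction N as [|N IHN].
  - simpl. rewrite P_tau_eq_0, P_tau_eq_S, tail_prob_0. ring.
  - change (sum_f_R0 (fun n => INR n * P_tau_eq d n) (S (S N)))
      with (sum_f_R0 (fun n => INR n * P_tau_eq d n) (S N)
            + INR (S (S N)) * P_tau_eq d (S (S N))).
    rewrite IHN, P_tau_eq_S. simpl sum_f_R0. rewrite !S_INR. ring.
Qed.

Lemma tail_sum_growing : Un_growing (sum_f_R0 (tail_prob d)).
Proof. intro n. simpl. pose proof (tail_prob_nonneg (S n)). lra. Qed.

Lemma tail_sum_le_log n : sum_f_R0 (tail_prob d) n <= 2 * ln (INR n + 2).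
Proof.
  induction n as [|n IHn].
  - simpl. rewrite tail_prob_0. pose proof ln_lt_2. replace (0 + 2) with 2 by ring. lra.
  - simpl sum_f_R0. assert (Htail := tail_prob_le_harmonic (S n)).
    assert (0 <= INR n) by apply pos_INR.
    assert (Hln := inv_succ_le_ln_diff (INR n + 2) ltac:(lra)).
    rewrite S_INR in *. replace (INR n + 1 + 2) with (INR n + 2 + 1) in * by ring.
    assert (2 / (INR n + 2 + 1) = 2 * (1 / (INR n + 2 + 1))) by (field; lra).
    lra.
Qed.

Lemma log_le_tail_sum K :
  4 * d * INR K <= 1 -> ln (INR K + 3) - ln 2 <= sum_f_R0 (tail_prob d) K.
Proof.
  induction K as [|K IHK]; intro HK.
  - simpl. rewrite tail_prob_0. assert (Hln := ln_diff_le_inv 2 ltac:(lra)).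
    replace (0 + 3) with (2 + 1) by ring. lra.
  - simpl sum_f_R0. assert (Htail := tail_prob_ge_harmonic (S K) HK).
    rewrite S_INR in *. assert (0 <= INR K) by apply pos_INR.
    assert (IH := IHK ltac:(lra)).
    assert (Hln := ln_diff_le_inv (INR K + 3) ltac:(lra)).
    replace (INR K + 1 + 3) with (INR K + 3 + 1) by ring.
    replace (INR K + 1 + 2) with (INR K + 3) in Htail by ring.
    lra.
Qed.

(* Harmonic up to [K], geometric beyond. *)
Lemma tail_sum_le_split K n :
  sum_f_R0 (tail_prob d) n <= 2 * ln (INR K + 2) + (1 - d) ^ (S K) / d.
Proof.
  assert (Hsplit : forall m, sum_f_R0 (tail_prob d) (K + m) <=
            2 * ln (INR K + 2) + (1 - d) ^ (S K) * (1 - (1 - d) ^ m) / d).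
  { induction m as [|m IHm].
    - rewrite Nat.add_0_r. replace (1 - (1 - d) ^ 0) with 0 by (simpl; ring).
      rewrite Rmult_0_r, Rdiv_0_l, Rplus_0_r. apply tail_sum_le_log.
    - rewrite Nat.add_succ_r. simpl sum_f_R0.
      assert (Htail := tail_prob_le_geometric (S (K + m))).
      replace ((1 - d) ^ S (K + m)) with ((1 - d) ^ S K * (1 - d) ^ m) in Htail
        by (rewrite <- pow_add; f_equal; lia).
      replace ((1 - d) ^ S K * (1 - (1 - d) ^ S m) / d) with
        ((1 - d) ^ S K * (1 - (1 - d) ^ m) / d + (1 - d) ^ S K * (1 - d) ^ m)
        by (simpl pow; field; lra).
      lra. }
  apply Rle_trans with (sum_f_R0 (tail_prob d) (K + n)).
  - apply tech9; [apply tail_sum_growing | lia].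
  - eapply Rle_trans; [apply Hsplit|].
    assert (Hpow1 := pow_unit_interval (1 - d) (S K) ltac:(lra)).
    assert (Hpow2 := pow_unit_interval (1 - d) n ltac:(lra)).
    unfold Rdiv. apply Rplus_le_compat_l, Rmult_le_compat_r.
    + left; apply Rinv_0_lt_compat; lra.
    + nra.
Qed.

Lemma tail_sum_cv : { E | Un_cv (sum_f_R0 (tail_prob d)) E }.
Proof.
  apply growing_cv; [apply tail_sum_growing|].
  exists (2 * ln (INR 0 + 2) + (1 - d) ^ 1 / d). intros x [n ->]. apply tail_sum_le_split.
Qed.

Lemma P_tau_ge_cv : Un_cv (P_tau_ge d) 0.
Proof.
  apply CV_shift with 1%nat.
  apply Un_cv_ext with (tail_prob d); [intro n; unfold tail_prob; f_equal; lia|].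
  apply geometric_squeeze with 1 (1 - d); [lra | lra|].
  intro n. rewrite Rmult_1_l. split; [apply tail_prob_nonneg | apply tail_prob_le_geometric].
Qed.

Lemma weighted_tail_cv : Un_cv (fun N => INR (S N) * tail_prob d (S N)) 0.
Proof.
  apply geometric_squeeze with (2 * (1 - d)) (1 - d); [lra | lra|].
  intro n. destruct (tail_prob_bounds (S n)) as [Hpos [_ Hup]].
  assert (0 <= INR n) by apply pos_INR. rewrite S_INR in *. simpl pow in Hup.
  assert (0 <= (1 - d) * (1 - d) ^ n) by (apply Rmult_le_pos, pow_le; lra).
  assert ((INR n + 1) * (2 / (INR n + 1 + 2)) <= 2).
  { apply Rmult_le_reg_r with (INR n + 1 + 2); [lra|]. field_simplify; lra. }
  split; [apply Rmult_le_pos; lra|].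
  apply Rle_trans with ((INR n + 1) * (2 / (INR n + 1 + 2)) * ((1 - d) * (1 - d) ^ n)).
  - rewrite Rmult_assoc. apply Rmult_le_compat_l; lra.
  - rewrite (Rmult_assoc 2). apply Rmult_le_compat_r; lra.
Qed.

Lemma expected_tau_tail_sum E : Un_cv (sum_f_R0 (tail_prob d)) E -> ExpectedTau d E.
Proof.
  intro HE. split; [apply P_tau_ge_cv|].
  unfold infinite_sum. change (Un_cv (sum_f_R0 (fun n => INR n * P_tau_eq d n)) E).
  apply CV_shift with 1%nat.
  apply Un_cv_ext with (fun N => sum_f_R0 (tail_prob d) N - INR (S N) * tail_prob d (S N)).
  { intro n. rewrite Nat.add_1_r, sum_weighted_P_tau_eq. reflexivity. }
  replace E with (E - 0) by ring. apply CV_minus; [exact HE | apply weighted_tail_cv].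
Qed.

Lemma expected_tau_tail_sum_limit E : ExpectedTau d E -> Un_cv (sum_f_R0 (tail_prob d)) E.
Proof.
  intros [_ HE]. destruct tail_sum_cv as [E0 HE0].
  replace E with E0; [exact HE0|].
  exact (uniqueness_sum _ _ _ (proj2 (expected_tau_tail_sum E0 HE0)) HE).
Qed.

End TailBounds.

Section SmallDrift.
Variable d : R.
Hypothesis d_small : 0 < d <= 1/64.

Lemma six_ln2_le_neg_ln : 6 * ln 2 <= - ln d.
Proof.
  assert (Hln : ln d <= ln (/ 2 ^ 6)) by (apply ln_le; lra).
  rewrite ln_Rinv, ln_pow in Hln by lra. simpl INR in Hln. lra.
Qed.

Lemma tail_sum_limit_ge_log E : Un_cv (sum_f_R0 (tail_prob d)) E -> - ln d / 2 <= E.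
Proof.
  intro HE.
  assert (Hinv : 16 <= / (4 * d)).
  { replace 16 with (/ (/ 16)) by field. apply Rinv_le_contravar; lra. }
  destruct (nat_between (/ (4 * d) - 1)) as [K HK]; [lra|].
  assert (HKd : 4 * d * INR K <= 1).
  { assert (4 * d * / (4 * d) = 1) by (field; lra). nra. }
  assert (Hsum := log_le_tail_sum d ltac:(lra) K HKd).
  assert (HsumE := growing_ineq _ _ (tail_sum_growing d ltac:(lra)) HE K).
  assert (Hln : ln (/ (4 * d)) <= ln (INR K + 3)) by (apply ln_le; [apply Rinv_0_lt_compat|]; lra).
  replace (4 * d) with (2 * 2 * d) in Hln by ring.
  rewrite ln_Rinv, !ln_mult in Hln by lra.
  pose proof six_ln2_le_neg_ln. lra.
Qed.

(* Split the sum at [K ~ 1/d^2]: the geometric part is then at most [1]. *)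
Lemma tail_sum_limit_le_log E : Un_cv (sum_f_R0 (tail_prob d)) E -> E <= 5 * (- ln d).
Proof.
  intro HE.
  assert (Hinv : 1 <= / (d * d)).
  { replace 1 with (/ 1) by field. apply Rinv_le_contravar; nra. }
  destruct (nat_between (/ (d * d))) as [K HK]; [lra|].
  assert (HEK := cv_le_upper_bound _ _ _ HE (tail_sum_le_split d ltac:(lra) K)).
  assert (Hgeom : (1 - d) ^ S K / d <= 1).
  { assert (Hpow := pow_one_sub_mul_le d K ltac:(lra)).
    assert (Hpos : 0 <= (1 - d) ^ K) by (apply pow_le; lra).
    assert (HKd : 1 <= INR K * d * d) by (assert (/ (d * d) * (d * d) = 1) by (field; lra); nra).
    simpl pow. apply Rmult_le_reg_r with d; [lra|].
    unfold Rdiv. rewrite Rmult_assoc, Rinv_l by lra. nra. }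
  assert (Hln : ln (INR K + 2) <= ln (2 * 2 * / (d * d))).
  { apply ln_le; [pose proof (pos_INR K); lra | lra]. }
  rewrite !ln_mult, ln_Rinv, ln_mult in Hln by (try apply Rinv_0_lt_compat; nra).
  pose proof six_ln2_le_neg_ln. pose proof ln_lt_2. lra.
Qed.

Lemma expected_tau_log_bounds E : ExpectedTau d E -> - ln d / 2 <= E <= 5 * (- ln d).
Proof.
  intro HE. apply expected_tau_tail_sum_limit in HE; [|lra].
  split; [apply tail_sum_limit_ge_log | apply tail_sum_limit_le_log]; assumption.
Qed.

End SmallDrift.

Theorem mainTheorem3 :
  (forall M : R, exists eta : R, 0 < eta /\
     forall delta E : R, 0 < delta < eta -> ExpectedTau delta E -> M < E) /\
  (exists c C : R, 0 < c /\ c <= C /\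
     exists delta0 : R, 0 < delta0 /\
       forall delta : R, 0 < delta < delta0 ->
         exists E : R, ExpectedTau delta E /\
           c * Rabs (ln delta) <= E /\ E <= C * Rabs (ln delta)).
Proof.
  split.
  - intro M. exists (Rmin (1/64) (exp (- (2 * Rabs M + 2)))).
    split; [apply Rmin_pos; [lra | apply exp_pos]|].
    intros d E [Hd_pos Hd_eta] HE.
    assert (Hd : 0 < d <= 1/64) by (pose proof (Rmin_l (1/64) (exp (- (2 * Rabs M + 2)))); lra).
    assert (Hln : ln d < - (2 * Rabs M + 2)).
    { rewrite <- (ln_exp (- (2 * Rabs M + 2))). apply ln_increasing; [lra|].
      pose proof (Rmin_r (1/64) (exp (- (2 * Rabs M + 2)))). lra. }
    destruct (expected_tau_log_bounds d Hd E HE). pose proof (RRle_abs M). lra.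
  - exists (1/2), 5. do 2 (split; [lra|]). exists (1/64). split; [lra|].
    intros d Hd. assert (Hd' : 0 < d <= 1/64) by lra.
    destruct (tail_sum_cv d ltac:(lra)) as [E HE].
    assert (HET := expected_tau_tail_sum d ltac:(lra) E HE).
    exists E. split; [exact HET|].
    destruct (expected_tau_log_bounds d Hd' E HET).
    pose proof (six_ln2_le_neg_ln d Hd'). pose proof ln_lt_2.
    rewrite Rabs_left by lra. lra.
Qed.
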